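(* Let $\mathcal L$ be an optionality-ignoring choice logic. Then for all $\mathcal L$-formulas $A,B$: $A\equiv^{s}_{\mathcal L}B$ if and only if $A\equiv^{\deg}_{\mathcal L}B$.
   Context: Fix a countably infinite set $\mathcal U$ of propositional variables. Let $\mathbb N=\{1,2,3,\dots\}$ and $\overline{\mathbb N}=\mathbb N\cup\{\infty\}$, with $n<\infty$ for all $n\in\mathbb N$. An interpretation is a set $\mathcal I\subseteq\mathcal U$ (the variables set to true). A choice logic $\mathcal L$ is specified by a finite set $C_{\mathcal L}$ of binary connective symbols disjoint from $\{\neg,\land,\lor\}$ and, for each $\circ\in C_{\mathcal L}$, a function $\mathrm{opt}_\circ:\mathbb N^2\to\mathbb N$ with $\mathrm{opt}_\circ(k,\ell)\le (k+1)(\ell+1)$ for all $k,\ell$, and a function $\deg_\circ:\mathbb N^2\times\overline{\mathbb N}^2\to\overline{\mathbb N}$ such that for all $k,\ell\in\mathbb N$, $m,n\in\overline{\mathbb N}$, either $\deg_\circ(k,\ell,m,n)\le \mathrm{opt}_\circ(k,\ell)$ or $\deg_\circ(k,\ell,m,n)=\infty$. The $\mathcal L$-formulas are built from variables in $\mathcal U$ using unary $\neg$ and binary $\land,\lor$ and the connectives in $C_{\mathcal L}$. The optionality $\mathrm{opt}_{\mathcal L}$ of formulas is defined by: $\mathrm{opt}_{\mathcal L}(a)=1$ for $a\in\mathcal U$; $\mathrm{opt}_{\mathcal L}(\neg F)=1$; $\mathrm{opt}_{\mathcal L}(F\land G)=\mathrm{opt}_{\mathcal L}(F\lor G)=\max(\mathrm{opt}_{\mathcal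 L}(F),\mathrm{opt}_{\mathcal L}(G))$; $\mathrm{opt}_{\mathcal L}(F\circ G)=\mathrm{opt}_\circ(\mathrm{opt}_{\mathcal L}(F),\mathrm{opt}_{\mathcal L}(G))$ for $\circ\in C_{\mathcal L}$. The satisfaction degree $\deg_{\mathcal L}(\mathcal I,F)\in\overline{\mathbb N}$ is defined by: $\deg_{\mathcal L}(\mathcal I,a)=1$ if $a\in\mathcal I$ and $\infty$ otherwise; $\deg_{\mathcal L}(\mathcal I,\neg F)=1$ if $\deg_{\mathcal L}(\mathcal I,F)=\infty$ and $\infty$ otherwise; $\deg_{\mathcal L}(\mathcal I,F\land G)=\max(\deg_{\mathcal L}(\mathcal I,F),\deg_{\mathcal L}(\mathcal I,G))$; $\deg_{\mathcal L}(\mathcal I,F\lor G)=\min(\deg_{\mathcal L}(\mathcal I,F),\deg_{\mathcal L}(\mathcal I,G))$; $\deg_{\mathcal L}(\mathcal I,F\circ G)=\deg_\circ(\mathrm{opt}_{\mathcal L}(F),\mathrm{opt}_{\mathcal L}(G),\deg_{\mathcal L}(\mathcal I,F),\deg_{\mathcal L}(\mathcal I,G))$ for $\circ\in C_{\mathcal L}$. An interpretation $\mathcal I$ is a preferred model of $F$, written $\mathcal I\in\mathrm{Pref}_{\mathcal L}(F)$, if $\deg_{\mathcal L}(\mathcal I,F)\ne\infty$ and $\deg_{\mathcal L}(\mathcal I,F)\le\deg_{\mathcal L}(\mathcal J,F)$ for all interpretations $\mathcal J$. $F[A/B]$ denotes the formula obtained from $F$ by replacing an occurrence of the subformula $A$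 by $B$ (and equals $F$ if $A$ does not occur in $F$). Two $\mathcal L$-formulas $A,B$ are degree-equivalent, $A\equiv^{\deg}_{\mathcal L}B$, if $\deg_{\mathcal L}(\mathcal I,A)=\deg_{\mathcal L}(\mathcal I,B)$ for all interpretations $\mathcal I$; they are strongly equivalent, $A\equiv^{s}_{\mathcal L}B$, if $\mathrm{Pref}_{\mathcal L}(F)=\mathrm{Pref}_{\mathcal L}(F[A/B])$ for all $\mathcal L$-formulas $F$. $\mathcal L$ is optionality-ignoring if for every $\circ\in C_{\mathcal L}$, every interpretation $\mathcal I$ and all $\mathcal L$-formulas $F,F',G,G'$ with $\deg_{\mathcal L}(\mathcal I,F)=\deg_{\mathcal L}(\mathcal I,F')$ and $\deg_{\mathcal L}(\mathcal I,G)=\deg_{\mathcal L}(\mathcal I,G')$ we have $\deg_{\mathcal L}(\mathcal I,F\circ G)=\deg_{\mathcal L}(\mathcal I,F'\circ G')$. *)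

From mathcomp Require Import all_boot.
Set Implicit Arguments.
Unset Strict Implicit.
Unset Printing Implicit Defensive.

(* Extended naturals  \overline{N}:  Some n = n,  None = infinity.
   Elements of N = {1,2,...} are represented by positive nats. *)
Definition ext := option nat.

Definition ext_le (x y : ext) : Prop :=
  match x, y with
  | _, None => True
  | None, Some _ => False
  | Some m, Some n => m <= n
  end.

Definition ext_max (x y : ext) : ext :=
  match x, y with
  | None, _ => None
  | _, None => None
  | Some m, Some n => Some (maxn m n)
  end.

Definition ext_min (x y : ext) : ext :=
  match x, y with
  | None, y => y
  | x, None => x
  | Some m, Some n => Some (minn m n)
  end.

Definition ext_pos (x : ext) : Prop :=
  match x with None => True | Some n => 0 < n end.

Record choiceLogic := ChoiceLogic {
  conn : finType;
  opt_c : conn -> nat -> nat -> nat;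
  deg_c : conn -> nat -> nat -> ext -> ext -> ext;
  opt_c_pos : forall c k l, 0 < k -> 0 < l -> 0 < opt_c c k l;
  opt_c_bound : forall c k l, 0 < k -> 0 < l ->
      opt_c c k l <= (k + 1) * (l + 1);
  deg_c_range : forall c k l m n, 0 < k -> 0 < l -> ext_pos m -> ext_pos n ->
      deg_c c k l m n = None \/
      (exists d, deg_c c k l m n = Some d /\ 0 < d /\ d <= opt_c c k l)
}.

(* Propositional variables: U = nat (countably infinite). *)
Inductive formula (C : Type) : Type :=
  | FVar : nat -> formula C
  | FNeg : formula C -> formula C
  | FAnd : formula C -> formula C -> formula C
  | FOr  : formula C -> formula C -> formula C
  | FConn : C -> formula C -> formula C -> formula C.

Arguments FVar {C} _.

Definition lformula (L : choiceLogic) := formula (conn L).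

Definition interp := nat -> bool.

Fixpoint optL (L : choiceLogic) (F : lformula L) : nat :=
  match F with
  | FVar _ => 1
  | FNeg _ => 1
  | FAnd F G => maxn (optL F) (optL G)
  | FOr F G => maxn (optL F) (optL G)
  | FConn c F G => opt_c c (optL F) (optL G)
  end.

Fixpoint degL (L : choiceLogic) (I : interp) (F : lformula L) : ext :=
  match F with
  | FVar a => if I a then Some 1 else None
  | FNeg F => match degL I F with None => Some 1 | Some _ => None end
  | FAnd F G => ext_max (degL I F) (degL I G)
  | FOr F G => ext_min (degL I F) (degL I G)
  | FConn c F G => deg_c c (optL F) (optL G) (degL I F) (degL I G)
  end.

Definition Pref (L : choiceLogic) (F : lformula L) (I : interp) : Prop :=
  degL I F <> None /\ forall J : interp, ext_le (degL I F) (degL J F).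

Inductive replace1 (C : Type) (A B : formula C) : formula C -> formula C -> Prop :=
  | rep_here : replace1 A B A B
  | rep_neg F F' : replace1 A B F F' -> replace1 A B (FNeg F) (FNeg F')
  | rep_andl F F' G : replace1 A B F F' -> replace1 A B (FAnd F G) (FAnd F' G)
  | rep_andr F G G' : replace1 A B G G' -> replace1 A B (FAnd F G) (FAnd F G')
  | rep_orl F F' G : replace1 A B F F' -> replace1 A B (FOr F G) (FOr F' G)
  | rep_orr F G G' : replace1 A B G G' -> replace1 A B (FOr F G) (FOr F G')
  | rep_connl c F F' G : replace1 A B F F' -> replace1 A B (FConn c F G) (FConn c F' G)
  | rep_connr c F G G' : replace1 A B G G' -> replace1 A B (FConn c F G) (FConn c F G').

Inductive subformula (C : Type) (A : formula C) : formula C -> Prop :=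
  | sub_here : subformula A A
  | sub_neg F : subformula A F -> subformula A (FNeg F)
  | sub_andl F G : subformula A F -> subformula A (FAnd F G)
  | sub_andr F G : subformula A G -> subformula A (FAnd F G)
  | sub_orl F G : subformula A F -> subformula A (FOr F G)
  | sub_orr F G : subformula A G -> subformula A (FOr F G)
  | sub_connl c F G : subformula A F -> subformula A (FConn c F G)
  | sub_connr c F G : subformula A G -> subformula A (FConn c F G).

(* F' is a possible value of F[A/B] *)
Definition is_subst (C : Type) (F A B F' : formula C) : Prop :=
  replace1 A B F F' \/ (~ subformula A F /\ F' = F).

Definition deg_equiv (L : choiceLogic) (A B : lformula L) : Prop :=
  forall I : interp, degL I A = degL I B.

Definition strong_equiv (L : choiceLogic) (A B : lformula L) : Prop :=
  forall F F' : lformula L, is_subst F A B F' ->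
    forall I : interp, Pref F I <-> Pref F' I.

Definition optionality_ignoring (L : choiceLogic) : Prop :=
  forall (c : conn L) (I : interp) (F F' G G' : lformula L),
    degL I F = degL I F' -> degL I G = degL I G' ->
    degL I (FConn c F G) = degL I (FConn c F' G').

From mathcomp Require Import all_boot.
From Stdlib Require Import Setoid.

Set Implicit Arguments.
Unset Strict Implicit.
Unset Printing Implicit Defensive.

(* (<-) In an optionality-ignoring logic every connective, and trivially the
   classical ones, computes the degree of a formula from the degrees of its
   immediate subformulas alone.  Hence replacing A by a degree-equivalent B
   anywhere in F does not change any degree, so F and F[A/B] have the same
   preferred models.

   (->) Given an interpretation I, pick a variable p occurring in neither A
   nor B, let chi_b be the conjunction of literals pinning every variable of
   A and B to its value under I and p to the boolean b, and consider the
   "switch" formula  S(X,Y) = (X /\ chi_false) \/ (Y /\ chi_true).  Its only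
   possibly satisfying interpretations agree with I outside p, where it has
   the degree of X (if p is false) or of Y (if p is true).  So I[p:=false]
   is preferred for S(X,Y) iff deg(I,X) is finite and at most deg(I,Y), and
   symmetrically for I[p:=true].  Comparing S(A,B) with S(B,B), which arises
   by one replacement of A by B, forces deg(I,A) = deg(I,B). *)

(* x is finite and at most y: an interpretation of degree x is preferred
   exactly when this holds for every competing degree y. *)
Definition fin_le (x y : ext) : Prop := x <> None /\ ext_le x y.

Lemma ext_le_refl (x : ext) : ext_le x x.
Proof. by case: x => //= n; rewrite leqnn. Qed.

Lemma ext_le_antisym (x y : ext) : ext_le x y -> ext_le y x -> x = y.
Proof. by case: x; case: y => //= m n le_nm le_mn; rewrite (@anti_leq n m) ?le_nm. Qed.

Lemma ext_max_guard (x : ext) (b : bool) :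
  ext_pos x -> ext_max x (if b then Some 1 else None) = if b then x else None.
Proof. by case: b; case: x => //= n n_gt0; rewrite (maxn_idPl n_gt0). Qed.

Lemma ext_min_infl (x : ext) : ext_min None x = x.
Proof. by case: x. Qed.

Lemma ext_min_infr (x : ext) : ext_min x None = x.
Proof. by case: x. Qed.

(* Two degrees that are interchangeable as competitors of y are equal: this
   is how the separating formula below pins down degrees. *)
Lemma fin_le_eq (x y : ext) :
  (fin_le x y <-> fin_le y y) -> (fin_le y x <-> fin_le y y) -> x = y.
Proof.
case: y => [n|] xy yx.
  have fin_le_nn : fin_le (Some n) (Some n) by split; last exact: ext_le_refl.
  have [_ le_xn] := proj2 xy fin_le_nn; have [_ le_nx] := proj2 yx fin_le_nn.
  exact: ext_le_antisym.
case: x xy {yx} => [m|] // xy.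
by have [] : fin_le None None by apply: (proj1 xy).
Qed.

Section Degrees.
Variable L : choiceLogic.
Implicit Types (F X Y : lformula L) (I J K : interp).

Lemma optL_pos F : 0 < optL F.
Proof.
elim: F => //= [F1 H1 F2 H2|F1 H1 F2 H2|c F1 H1 F2 H2]; last exact: opt_c_pos.
- by rewrite leq_max H1.
- by rewrite leq_max H1.
Qed.

Lemma degL_pos I F : ext_pos (degL I F).
Proof.
elim: F => /= [a|F _|F1 H1 F2 H2|F1 H1 F2 H2|c F1 H1 F2 H2].
- by case: (I a).
- by case: (degL I F).
- by move: H1 H2; case: (degL I F1) => [m|]; case: (degL I F2) => [n|] //= m_gt0;
    rewrite leq_max m_gt0.
- by move: H1 H2; case: (degL I F1) => [m|]; case: (degL I F2) => [n|] //= m_gt0;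
    rewrite leq_min m_gt0.
- by case: (deg_c_range c (optL_pos F1) (optL_pos F2) H1 H2) => [->|[d [-> []]]].
Qed.

Fixpoint vars F : seq nat :=
  match F with
  | FVar a => [:: a]
  | FNeg F => vars F
  | FAnd F G | FOr F G | FConn _ F G => vars F ++ vars G
  end.

Lemma degL_agree I J F : {in vars F, I =1 J} -> degL I F = degL J F.
Proof.
elim: F => /= [a|F IH|F1 IH1 F2 IH2|F1 IH1 F2 IH2|c F1 IH1 F2 IH2] IJ;
  rewrite ?IJ ?mem_seq1 ?IH ?IH1 ?IH2 // => v v_in; apply: IJ;
  by rewrite mem_cat v_in ?orbT.
Qed.

Definition lit (b : bool) (v : nat) : lformula L :=
  if b then FVar v else FNeg (FVar v).

Lemma degL_lit J b v : degL J (lit b v) = if J v == b then Some 1 else None.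
Proof. by rewrite /lit; case: b => /=; case: (J v). Qed.

Definition cube K (v : nat) (V : seq nat) : lformula L :=
  foldr (fun w C => FAnd (lit (K w) w) C) (lit (K v) v) V.

Lemma degL_cube J K v V :
  degL J (cube K v V) =
  if (J v == K v) && all (fun w => J w == K w) V then Some 1 else None.
Proof.
elim: V => [|w V IH] /=; first by rewrite degL_lit andbT.
by rewrite IH degL_lit; case: (J w == K w); case: (J v == K v); case: all.
Qed.

End Degrees.

Arguments cube {L}.

Section Congruence.
Variables (L : choiceLogic) (A B : lformula L).
Hypothesis HL : optionality_ignoring L.
Hypothesis AB : deg_equiv A B.

Lemma degL_replace F F' : replace1 A B F F' -> forall I, degL I F = degL I F'.
Proof.
elim=> //= {F F'} => [F F' _ IH|F F' G _ IH|F G G' _ IH|F F' G _ IH|F G G' _ IH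
                     |c F F' G _ IH|c F G G' _ IH] I;
  by [rewrite IH | apply: HL].
Qed.

Lemma deg_equiv_strong_equiv : strong_equiv A B.
Proof.
move=> F F' [FF'|[_ ->]] I //; have E := degL_replace FF'.
by rewrite /Pref E; split=> -[fin best]; split=> // J; move: (best J); rewrite E.
Qed.

End Congruence.

Section Separation.
Variables (L : choiceLogic) (I : interp) (V : seq nat) (p : nat).
Hypothesis p_fresh : p \notin V.

Definition I_at (b : bool) : interp := fun v => if v == p then b else I v.

Lemma I_at_p b : I_at b p = b.
Proof. by rewrite /I_at eqxx. Qed.

Lemma all_agree_I_at J b :
  all (fun w => J w == I_at b w) V = all (fun w => J w == I w) V.
Proof.
apply: eq_in_all => w w_in; rewrite /I_at ifN //.
by apply: contraNneq p_fresh => <-.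
Qed.

Definition switch (X Y : lformula L) : lformula L :=
  FOr (FAnd X (cube (I_at false) p V)) (FAnd Y (cube (I_at true) p V)).

Lemma degL_switch X Y J :
  {subset vars X <= V} -> {subset vars Y <= V} ->
  degL J (switch X Y) =
  if all (fun w => J w == I w) V then degL I (if J p then Y else X) else None.
Proof.
move=> XV YV; rewrite /= !degL_cube !(ext_max_guard _ (degL_pos _ _)).
rewrite !all_agree_I_at !I_at_p.
case JV: all; last by case: (J p).
have agree Z : {subset vars Z <= V} -> degL J Z = degL I Z.
  by move=> ZV; apply: degL_agree => w /ZV w_in; apply/eqP; apply: (allP JV).
by case: (J p); rewrite /= ?ext_min_infl ?ext_min_infr agree.
Qed.

Lemma pref_switch X Y b :
  {subset vars X <= V} -> {subset vars Y <= V} ->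
  Pref (switch X Y) (I_at b) <->
  fin_le (degL I (if b then Y else X)) (degL I (if b then X else Y)).
Proof.
move=> XV YV; have all_I_at c : all (fun w => I_at c w == I w) V.
  by rewrite -(all_agree_I_at _ c); apply/allP => w _.
rewrite /Pref degL_switch // all_I_at I_at_p.
split=> -[fin best]; split=> //.
  move: (best (I_at (~~ b))).
  by rewrite degL_switch // all_I_at I_at_p; case: b {fin best}.
move=> J; rewrite degL_switch //; case: all; last by case: degL.
by case: (J p); case: b fin best => _ best //; apply: ext_le_refl.
Qed.

End Separation.

Lemma fresh_notin (V : seq nat) : (\max_(v <- V) v).+1 \notin V.
Proof.
apply/negP => /(leq_bigmax_seq (P := predT) (F := id) _) /(_ isT).
by rewrite ltnn.
Qed.

Lemma strong_equiv_deg_equiv (L : choiceLogic) (A B : lformula L) :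
  strong_equiv A B -> deg_equiv A B.
Proof.
move=> AsB I; set V := vars A ++ vars B.
have AV : {subset vars A <= V} by move=> v v_in; rewrite mem_cat v_in.
have BV : {subset vars B <= V} by move=> v v_in; rewrite mem_cat v_in orbT.
have p_fresh := fresh_notin V; set p := _.+1 in p_fresh.
have AB_BB : is_subst (switch I V p A B) A B (switch I V p B B).
  by left; apply/rep_orl/rep_andl/rep_here.
have pref b := AsB _ _ AB_BB (I_at I p b).
move: (pref false) (pref true).
by rewrite !pref_switch //; apply: fin_le_eq.
Qed.

Theorem mainTheorem7 (L : choiceLogic) (HL : optionality_ignoring L)
  (A B : lformula L) :
  strong_equiv A B <-> deg_equiv A B.
Proof.
split; first exact: strong_equiv_deg_equiv.
exact: deg_equiv_strong_equiv.
Qed.
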